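(* Let $\lambda=(\lambda_{m,s})_{m\in[M],s\in[S]}\in\Lambda$. Consider any scheduling policy (possibly using knowledge of arrival statistics, past and future arrivals, and past configurations) that at each slot $t$ chooses job service configurations $N^l(t)\in\mathcal N^l$ for all $l\in[L]$ and keeps the system stable, i.e. $\lim_{t\to\infty}\sum_{m,s}\mathbb E[Q_{m,s}(t)]<\infty$. Then its long-run average cost satisfies $$\liminf_{T\to\infty}\frac1T\sum_{t=1}^{T}\mathbb E\Big[\sum_{l\in[L]}\big(V\,C_1^l(N^l(t))+U\,C_2^l(N^l(t-1),N^l(t))\big)\Big]\ \ge\ C_{\mathrm{opt}}(\lambda),$$ where $C_{\mathrm{opt}}(\lambda)$ is the optimal value of $$\min_{(\lambda^l)_{l},\,P,\,\pi}\ \sum_{l\in[L]}\Big(V\,C^l_{\pi^l,1}+U\,C^l_{P^l,\pi^l,2}\Big)$$ subject to: $\lambda^l=(\lambda^l_{m,s})$ nonnegative with $\sum_l\lambda^l=\lambda$; for each $l$, $\pi^l$ is a probability distribution on $\mathcal N^l$ and $P^l$ is a stochastic matrix indexed by $\mathcal N^l\times\mathcal N^l$ with $\pi^lP^l=\pi^l$; and $\sum_s s\lambda^l_{m,s}\le\sum_{N\in\mathcal N^l}\pi^l_N\sum_s N_{m,s}$ for all $l,m$. Here $$C^l_{\pi^l,1}=\sum_{N\in\mathcal N^l}\pi^l_N\Big(c_0\mathbb 1_{\{N\neq0\}}+\sum_m c_m\sum_s N_{m,s}\Big),\qquad C^l_{P^l,\pi^l,2}=\sum_{N\in\mathcal N^l}\pi^l_N\sum_{N'\in\mathcal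 N^l}P^l_{N,N'}\sum_{m,\,s\ge2}\big[N_{m,s}-N'_{m,s-1}\big]^+.$$
   Context: Cloud system: $L$ servers, $M$ VM types, $K$ resource types. Server $l$ has $C_{l,k}$ units of resource $k$; a type-$m$ VM needs $R_{m,k}$ units of resource $k$. $\mathcal W^l=\{\eta\in\mathbb Z_{\ge0}^M:\sum_m\eta_mR_{m,k}\le C_{l,k}\ \forall k\}$ is the set of feasible VM configurations at server $l$. Time is slotted. A type-$(m,s)$ job requires a type-$m$ VM for $s$ slots, $s\in[S]$ ($S$ = maximum job size). A job service configuration at server $l$ is a matrix $N=(N_{m,s})_{m\in[M],s\in[S]}$ of nonnegative integers ($N_{m,s}$ = number of VMs given to type-$(m,s)$ jobs) with $(\sum_sN_{m,s})_m\in\mathcal W^l$; $\mathcal N^l$ is the set of these. $A_{m,s}(t)$ = number of type-$(m,s)$ arrivals in slot $t$; these are i.i.d. across slots, bounded by $A_{\max}$, with $\mathbb E[A_{m,s}(t)]=\lambda_{m,s}$ and $\Pr(A_{m,s}(t)=0)>0$. $Q_{m,s}(t)$ = number of type-$(m,s)$ jobs in the system; a type-$(m,s)$ job served in slot $t$ becomes a type-$(m,s-1)$ job at $t+1$ (and leaves if $s=1$). Capacity region: $\Lambda$ is the set of $\lambda$ such that for every $l$ there are $\beta^l_W\ge0$, $W\in\mathcal W^l$, $\sum_{W}\beta^l_W=1$, with $\sum_s s\lambda_{m,s}=\sum_l\sum_{W\in\mathcal W^l}\beta^l_WW_m$ for all $m$. Costs: given constants $c_0\ge0$ (static power) and $c_m\ge0$,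 the server running cost is $C_1^l(N)=c_0\mathbb 1_{\{N\ne0\}}+\sum_m c_m\sum_sN_{m,s}$; the (online) job migration cost is $C_2^l(N,N')=\sum_{m}\sum_{s\ge2}(N_{m,s}-N'_{m,s-1})^+$ for consecutive configurations $N$ (slot $t-1$) and $N'$ (slot $t$). $U,V\ge0$ are weighting parameters. *)

From HB Require Import structures.
From mathcomp Require Import all_boot all_order all_algebra.
From mathcomp Require Import all_classical all_reals all_analysis.
Set Implicit Arguments. Unset Strict Implicit. Unset Printing Implicit Defensive.
Import Order.TTheory GRing.Theory Num.Theory.
Local Open Scope classical_set_scope.
Local Open Scope ring_scope.

(* Index conventions: servers 'I_L, VM types 'I_M, resource types 'I_K,
   job sizes 'I_S where the ordinal j stands for the size j+1 (so s in [S]). *)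

Section Model.
Variables (L M K S : nat).
Variables (Cap : 'I_L -> 'I_K -> nat) (Req : 'I_M -> 'I_K -> nat).

Definition vmcfg := {ffun 'I_M -> nat}.
Definition cfg := {ffun 'I_M * 'I_S -> nat}.

Definition feasibleW (l : 'I_L) (eta : 'I_M -> nat) : bool :=
  [forall k : 'I_K, \sum_(m < M) eta m * Req m k <= Cap l k]%N.

Definition feasibleN (l : 'I_L) (N : cfg) : bool :=
  feasibleW l (fun m => \sum_(s < S) N (m, s))%N.

(* every entry of a feasible configuration is at most Cmax when each VM type
   requires a positive amount of some resource *)
Definition Cmax : nat := (\max_(l < L) \max_(k < K) Cap l k)%N.

Definition bounded_vmcfgs : seq vmcfg :=
  [seq [ffun m => nat_of_ord (f m)] | f : {ffun 'I_M -> 'I_(Cmax.+1)} <- enum {ffun 'I_M -> 'I_(Cmax.+1)}].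
Definition bounded_cfgs : seq cfg :=
  [seq [ffun i => nat_of_ord (f i)] | f : {ffun 'I_M * 'I_S -> 'I_(Cmax.+1)} <- enum {ffun 'I_M * 'I_S -> 'I_(Cmax.+1)}].

Definition Wset (l : 'I_L) : seq vmcfg := seq.filter (fun W : vmcfg => feasibleW l (fun m => W m)) bounded_vmcfgs.
Definition Nset (l : 'I_L) : seq cfg := [seq N <- bounded_cfgs | feasibleN l N].

(* index of size s-1 for an index of size s (used only when s >= 2) *)
Definition ordpred (j : 'I_S) : 'I_S :=
  Ordinal (leq_ltn_trans (leq_pred j) (ltn_ord j)).

Variable R : realType.
Variables (c0 : R) (c : 'I_M -> R).

Definition cost1 (N : cfg) : R :=
  c0 * (N != [ffun _ => 0%N])%:R + \sum_(m < M) c m * (\sum_(s < S) N (m, s))%:R.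

Definition cost2 (N N' : cfg) : R :=
  (\sum_(m < M) \sum_(j < S | (0 < j)%N) (N (m, j) - N' (m, ordpred j))%N)%:R.

Definition in_capacity_region (lam : 'I_M * 'I_S -> R) : Prop :=
  exists beta : 'I_L -> vmcfg -> R,
    (forall l W, W \in Wset l -> 0 <= beta l W) /\
    (forall l, \sum_(W <- Wset l) beta l W = 1) /\
    (forall m, \sum_(s < S) (s.+1)%:R * lam (m, s)
               = \sum_(l < L) \sum_(W <- Wset l) beta l W * (W m)%:R).

Definition opt_feasible (lam : 'I_M * 'I_S -> R)
    (laml : 'I_L -> 'I_M * 'I_S -> R) (pi : 'I_L -> cfg -> R)
    (P : 'I_L -> cfg -> cfg -> R) : Prop :=
  (forall l i, 0 <= laml l i) /\
  (forall i, \sum_(l < L) laml l i = lam i) /\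
  (forall l N, N \in Nset l -> 0 <= pi l N) /\
  (forall l, \sum_(N <- Nset l) pi l N = 1) /\
  (forall l N N', N \in Nset l -> N' \in Nset l -> 0 <= P l N N') /\
  (forall l N, N \in Nset l -> \sum_(N' <- Nset l) P l N N' = 1) /\
  (forall l N', N' \in Nset l -> \sum_(N <- Nset l) pi l N * P l N N' = pi l N') /\
  (forall l m, \sum_(s < S) (s.+1)%:R * laml l (m, s)
               <= \sum_(N <- Nset l) pi l N * (\sum_(s < S) N (m, s))%:R).

Variables (U V : R).

Definition opt_objective (pi : 'I_L -> cfg -> R) (P : 'I_L -> cfg -> cfg -> R) : R :=
  \sum_(l < L)
    (V * (\sum_(N <- Nset l) pi l N * cost1 N)
     + U * (\sum_(N <- Nset l) pi l N *
              \sum_(N' <- Nset l) P l N N' * cost2 N N')).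

Definition Copt (lam : 'I_M * 'I_S -> R) : R :=
  inf [set v | exists laml pi P, opt_feasible lam laml pi P /\ v = opt_objective pi P].

Definition served (Q : cfg) (Ns : 'I_L -> cfg) : cfg :=
  [ffun i => minn (Q i) (\sum_(l < L) Ns l i)]%N.

(* served type-(m,s+1) jobs become type-(m,s) jobs; served type-(m,1) jobs leave *)
Definition qstep (Q D Anew : cfg) : cfg :=
  [ffun i : 'I_M * 'I_S =>
     (Q i - D i + odflt 0 (omap (fun j' : 'I_S => D (i.1, j')) (insub (i.2).+1)) + Anew i)%N].

Fixpoint queue (A : nat -> cfg) (N : 'I_L -> nat -> cfg) (t : nat) : cfg :=
  match t with
  | 0 => [ffun _ => 0%N]
  | t'.+1 => qstep (queue A N t') (served (queue A N t') (fun l => N l t')) (A t')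
  end.

Definition slot_cost (N : 'I_L -> nat -> cfg) (t : nat) : R :=
  \sum_(l < L) (V * cost1 (N l t) + U * cost2 (N l t.-1) (N l t)).

End Model.

Section Prob.
Local Open Scope ereal_scope.
Context {d : measure_display} {Omega : measurableType d} {R : realType}.

(* every event {X \in B} is measurable (X takes countably many values) *)
Definition rv_meas (T : Type) (X : Omega -> T) : Prop :=
  forall B : set T, measurable (X @^-1` B).

Definition iid_seq (P : probability Omega R) (T : Type) (X : nat -> Omega -> T) : Prop :=
  (forall (ts : seq nat) (B : nat -> set T), uniq ts ->
     P (\big[setI/setT]_(t <- ts) (X t @^-1` B t))
     = \prod_(t <- ts) P (X t @^-1` B t)) /\
  (forall t (B : set T), P (X t @^-1` B) = P (X 0%N @^-1` B)).

Definition expect (P : probability Omega R) (f : Omega -> R) : \bar R :=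
  \int[P]_w (f w)%:E.
End Prob.

(* Averaging over the first T slots the joint law of the configurations
   (N^l(t-1), N^l(t)) of each server gives an occupation measure mu_T on pairs
   of configurations, whose cost is exactly the average cost of the policy up
   to T.  Its two marginals average the laws of slots 0..T-1 and 1..T, so they
   differ by at most 1/T.  The work sum_s s A_{m,s}(t) brought by the arrivals
   is either served, which uses type-m VMs, or still queued; stability bounds
   the queue, so the capacity offered by mu_T covers sum_s s lambda_{m,s} up
   to O(1/T).  The mu_T live in a compact cube of the product topology, so
   along slots where the average cost stays below some r < C_opt they have a
   cluster point mu: a stationary occupation measure meeting the capacity
   constraints with cost at most r.  Conditioning mu on its first
   configuration gives a feasible (pi, P) and splitting lambda among the
   servers in proportion to their capacities gives feasible lambda^l, whence
   C_opt <= r, a contradiction. *)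

From HB Require Import structures.
From mathcomp Require Import all_boot all_order all_algebra.
From mathcomp Require Import all_classical all_reals all_analysis.
From mathcomp Require Import measurable_realfun zify ring lra.

Set Implicit Arguments. Unset Strict Implicit. Unset Printing Implicit Defensive.
Import Order.TTheory GRing.Theory Num.Theory numFieldNormedType.Exports.
Local Open Scope classical_set_scope.

Section WorkConservation.
Variables (L M S : nat).
Implicit Types (q D a : cfg M S) (cfgs : 'I_L -> cfg M S).

Definition work m q := \sum_(s < S) s.+1 * q (m, s).
Definition nvms m q := \sum_(s < S) q (m, s).

(* [odflt 0 (omap f (insub n))] is [f n] when [n < S] and [0] otherwise: this is
   how [qstep] moves a served job one size down. *)
Lemma sum_weighted_shift (f : 'I_S -> nat) :
  \sum_(s < S) s.+1 * odflt 0 (omap f (insub s.+1)) + \sum_(s < S) f s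
  = \sum_(s < S) s.+1 * f s.
Proof.
pose F n := n * odflt 0 (omap f (insub n)).
have shifted : \sum_(s < S) s.+1 * odflt 0 (omap f (insub s.+1)) = \sum_(s < S) F s.
  have lower : \sum_(i < S.+1) F i = \sum_(s < S) F s.+1.
    by rewrite big_ord_recl /F mul0n.
  by rewrite -[LHS]/(\sum_(s < S) F s.+1) -lower big_ord_recr /= /F insubF ?ltnn ?muln0 ?addn0.
rewrite shifted -big_split; apply: eq_bigr => s _.
by rewrite /F valK /= mulSn addnC.
Qed.

Lemma work_qstep m q D a : (forall i, D i <= q i) ->
  work m (qstep q D a) + nvms m D = work m q + work m a.
Proof.
move=> Dq; rewrite /work /nvms.
have -> : \sum_(s < S) s.+1 * qstep q D a (m, s) =
    \sum_(s < S) s.+1 * (q (m, s) - D (m, s))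
  + \sum_(s < S) s.+1 * odflt 0 (omap (fun j : 'I_S => D (m, j)) (insub s.+1))
  + \sum_(s < S) s.+1 * a (m, s).
  by rewrite -!big_split; apply: eq_bigr => s _; rewrite ffunE !mulnDr.
have served_work : \sum_(s < S) s.+1 * (q (m, s) - D (m, s)) + \sum_(s < S) s.+1 * D (m, s)
    = \sum_(s < S) s.+1 * q (m, s).
  by rewrite -big_split; apply: eq_bigr => s _ /=; rewrite -mulnDr subnK.
have := sum_weighted_shift (fun j => D (m, j)); lia.
Qed.

Lemma served_le q cfgs i : served q cfgs i <= q i.
Proof. by rewrite ffunE geq_minl. Qed.

Lemma nvms_served m q cfgs : nvms m (served q cfgs) <= \sum_(l < L) nvms m (cfgs l).
Proof.
rewrite /nvms exchange_big /=; apply: leq_sum => s _; rewrite ffunE; exact: geq_minr.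
Qed.

Lemma work_arrivals_le (A : nat -> cfg M S) (N : 'I_L -> nat -> cfg M S) m T :
  \sum_(t < T) work m (A t)
  <= work m (queue A N T) + \sum_(t < T) \sum_(l < L) nvms m (N l t).
Proof.
elim: T => [|T IH]; first by rewrite !big_ord0.
rewrite !big_ord_recr /=.
have := work_qstep m (A T) (served_le (queue A N T) (fun l => N l T)).
have := nvms_served m (queue A N T) (fun l => N l T).
(* the [set]s make the big sums syntactically equal atoms for [lia] *)
move: IH; set arrived := \sum_(t < T) _; set capacity := \sum_(t < T) _.
set served_now := nvms m _; set capacity_now := \sum_(l < L) _.
lia.
Qed.

Lemma work_le_total m q : work m q <= S * \sum_i q i.
Proof.
rewrite (leq_trans (_ : _ <= S * nvms m q)) // /work /nvms.
  by rewrite big_distrr /= leq_sum // => s _; rewrite leq_mul2r ltn_ord orbT.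
apply: leq_mul => //.
rewrite (_ : \sum_i q i = \sum_(m' < M) nvms m' q); last first.
  by rewrite pair_big; apply: eq_big => // -[].
by rewrite (bigD1 m) //= leq_addr.
Qed.

End WorkConservation.

Local Open Scope ring_scope.

Lemma sum_seq_eq1 (R : numDomainType) (T : eqType) (s : seq T) (x : T) :
  x \in s -> uniq s -> \sum_(y <- s) ((x == y)%:R : R) = 1.
Proof.
move=> xs us; rewrite (bigD1_seq x) //= eqxx big1 ?addr0 // => y.
by rewrite eq_sym => /negPf ->.
Qed.

Lemma ler_sum_seq_term (R : numDomainType) (T : eqType) (s : seq T) (F : T -> R) (x : T) :
  x \in s -> uniq s -> (forall y, y \in s -> 0 <= F y) -> F x <= \sum_(y <- s) F y.
Proof.
move=> xs us F0; rewrite (bigD1_seq x) //= lerDl big_seq_cond.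
by apply: sumr_ge0 => y /andP [/F0].
Qed.

Lemma Nset_uniq (L M K S : nat) (Cap : 'I_L -> 'I_K -> nat) (Req : 'I_M -> 'I_K -> nat) l :
  uniq (Nset S Cap Req l).
Proof.
apply: filter_uniq; rewrite /bounded_cfgs map_inj_uniq ?enum_uniq //.
by move=> f g /ffunP fg; apply/ffunP => i; apply: val_inj; have := fg i; rewrite !ffunE.
Qed.

Section StationaryOccupation.
Variables (L M K S : nat) (Cap : 'I_L -> 'I_K -> nat) (Req : 'I_M -> 'I_K -> nat).
Variables (R : realType) (c0 : R) (c : 'I_M -> R) (U V : R).
Variable lam : 'I_M * 'I_S -> R.
Local Notation Ns l := (Nset S Cap Req l).
Local Notation cfg := (cfg M S).
Implicit Types (mu : 'I_L * cfg * cfg -> R) (l : 'I_L) (m : 'I_M) (x y : cfg).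

Definition load m : R := \sum_(s < S) (s.+1)%:R * lam (m, s).

(* [mu (l, x, y)] is the long-run frequency with which server [l] moves from
   configuration [x] to configuration [y]. *)
Definition occ_cost mu : R :=
  \sum_(l < L) (V * (\sum_(x <- Ns l) \sum_(y <- Ns l) mu (l, x, y) * cost1 c0 c y)
              + U * (\sum_(x <- Ns l) \sum_(y <- Ns l) mu (l, x, y) * cost2 R x y)).
Definition occ_capacity mu m : R :=
  \sum_(l < L) \sum_(x <- Ns l) \sum_(y <- Ns l) mu (l, x, y) * (nvms m x)%:R.
Definition occ_fst mu l x : R := \sum_(y <- Ns l) mu (l, x, y).
Definition occ_snd mu l y : R := \sum_(x <- Ns l) mu (l, x, y).

Lemma opt_objective_ge0 laml pi P :
  0 <= c0 -> (forall m, 0 <= c m) -> 0 <= U -> 0 <= V ->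
  opt_feasible Cap Req lam laml pi P -> 0 <= opt_objective Cap Req c0 c U V pi P.
Proof.
move=> c00 c_ge0 U0 V0 [_ [_ [pi0 [_ [P0 _]]]]].
have cost1_ge0 y : 0 <= cost1 c0 c y.
  by rewrite addr_ge0 ?mulr_ge0 ?sumr_ge0 // => m _; rewrite mulr_ge0.
apply: sumr_ge0 => l _; rewrite addr_ge0 // mulr_ge0 // big_seq sumr_ge0 // => x xs.
  by rewrite mulr_ge0 ?pi0.
by rewrite mulr_ge0 ?pi0 // big_seq sumr_ge0 // => y ys; rewrite mulr_ge0 ?P0 ?ler0n.
Qed.

Variable mu : 'I_L * cfg * cfg -> R.
Hypothesis lam_ge0 : forall i, 0 <= lam i.
Hypotheses (mu_ge0 : forall i, 0 <= mu i)
  (mu_sum1 : forall l, \sum_(x <- Ns l) \sum_(y <- Ns l) mu (l, x, y) = 1)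
  (mu_stationary : forall l x, x \in Ns l -> occ_fst mu l x = occ_snd mu l x)
  (mu_capacity : forall m, load m <= occ_capacity mu m).

Definition occ_pi l x : R := occ_snd mu l x.

(* rows at configurations that [mu] never visits are arbitrary *)
Definition occ_kernel l x y : R :=
  if occ_pi l x != 0 then mu (l, x, y) / occ_pi l x else (x == y)%:R.

Definition server_capacity l m : R := \sum_(x <- Ns l) occ_pi l x * (nvms m x)%:R.
Definition total_capacity m : R := \sum_(l < L) server_capacity l m.

Definition occ_split l (i : 'I_M * 'I_S) : R :=
  if total_capacity i.1 != 0 then lam i * (server_capacity l i.1 / total_capacity i.1)
  else 0.

Lemma occ_pi_ge0 l x : 0 <= occ_pi l x.
Proof. exact: sumr_ge0. Qed.

Lemma server_capacity_ge0 l m : 0 <= server_capacity l m.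
Proof. by apply: sumr_ge0 => x _; rewrite mulr_ge0 ?occ_pi_ge0. Qed.

Lemma total_capacity_ge0 m : 0 <= total_capacity m.
Proof. by apply: sumr_ge0 => l _; exact: server_capacity_ge0. Qed.

Lemma occ_capacity_totalE m : occ_capacity mu m = total_capacity m.
Proof.
apply: eq_bigr => l _; rewrite [RHS]big_seq [LHS]big_seq; apply: eq_bigr => x xs.
by rewrite -mulr_suml -/(occ_fst mu l x) mu_stationary.
Qed.

Lemma occ_pi_kernel l x y : x \in Ns l -> y \in Ns l ->
  occ_pi l x * occ_kernel l x y = mu (l, x, y).
Proof.
move=> xs ys; rewrite /occ_kernel; case: ifPn => [pi_neq0|/negbNE/eqP pi0].
  by rewrite mulrC divfK.
apply/esym/eqP; rewrite pi0 mul0r eq_le mu_ge0 andbT -pi0 /occ_pi -mu_stationary //.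
by apply: (ler_sum_seq_term (F := fun y => mu (l, x, y))); rewrite ?Nset_uniq.
Qed.

Lemma occ_split_sum i : \sum_(l < L) occ_split l i = lam i.
Proof.
case: i => m s; rewrite /occ_split /=.
have [cap0|cap_neq0] := eqVneq (total_capacity m) 0 => /=; last first.
  by rewrite -mulr_sumr -mulr_suml divff ?mulr1.
rewrite big1 //; apply/esym.
have load_le0 : load m <= 0 by rewrite -cap0 -occ_capacity_totalE; exact: mu_capacity.
have : load m == 0 by rewrite eq_le load_le0 sumr_ge0 // => j _; rewrite mulr_ge0.
rewrite psumr_eq0 => [/allP/(_ s (mem_index_enum _))|j _]; last by rewrite mulr_ge0.
by rewrite mulf_eq0 pnatr_eq0 => /eqP.
Qed.

Lemma occ_split_capacity l m :
  \sum_(s < S) (s.+1)%:R * occ_split l (m, s) <= server_capacity l m.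
Proof.
rewrite /occ_split /=; have [cap0|cap_neq0] := eqVneq (total_capacity m) 0 => /=.
  by rewrite big1 ?server_capacity_ge0 // => s _; rewrite mulr0.
under eq_bigr do rewrite mulrA; rewrite -mulr_suml -/(load m).
have cap_gt0 : 0 < total_capacity m by rewrite lt0r cap_neq0 total_capacity_ge0.
by rewrite mulrA ler_pdivrMr // mulrC ler_wpM2l ?server_capacity_ge0 // -occ_capacity_totalE.
Qed.

Lemma opt_feasible_occ : opt_feasible Cap Req lam occ_split occ_pi occ_kernel.
Proof.
split.
  move=> l i; rewrite /occ_split; case: ifP => // _.
  by rewrite mulr_ge0 ?divr_ge0 ?server_capacity_ge0 ?total_capacity_ge0.
split; first exact: occ_split_sum.
split; first by move=> *; exact: occ_pi_ge0.
split; first by move=> l; rewrite /occ_pi /occ_snd exchange_big; exact: mu_sum1.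
split.
  move=> l x y _ _; rewrite /occ_kernel; case: ifP => _; last by rewrite ler0n.
  by rewrite divr_ge0 ?occ_pi_ge0.
split.
  move=> l x xs; rewrite /occ_kernel.
  have [pi0|pi_neq0] := eqVneq (occ_pi l x) 0 => /=; first exact/sum_seq_eq1/Nset_uniq.
  by rewrite -mulr_suml -/(occ_fst mu l x) mu_stationary // divff.
split; last exact: occ_split_capacity.
move=> l y ys; rewrite big_seq; under eq_bigr => x xs do rewrite occ_pi_kernel //.
by rewrite -big_seq.
Qed.

Lemma opt_objective_occ : opt_objective Cap Req c0 c U V occ_pi occ_kernel = occ_cost mu.
Proof.
apply: eq_bigr => l _; congr (V * _ + U * _).
  by rewrite exchange_big; apply: eq_bigr => y _; rewrite mulr_suml.
rewrite !big_seq; apply: eq_bigr => x xs; rewrite mulr_sumr !big_seq.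
by apply: eq_bigr => y ys; rewrite mulrA occ_pi_kernel.
Qed.

Lemma Copt_le_occ_cost :
  0 <= c0 -> (forall m, 0 <= c m) -> 0 <= U -> 0 <= V ->
  Copt Cap Req c0 c U V lam <= occ_cost mu.
Proof.
move=> c00 c_ge0 U0 V0; rewrite -opt_objective_occ; apply: ge_inf.
  by exists 0 => _ [laml [pi [P [feas ->]]]]; exact: opt_objective_ge0 feas.
by exists occ_split, occ_pi, occ_kernel; split=> //; exact: opt_feasible_occ.
Qed.

End StationaryOccupation.

Lemma sum_pair_indicator (R : numDomainType) (T : eqType) (s : seq T) (g : T -> T -> R) a b :
  uniq s -> a \in s -> b \in s ->
  g a b = \sum_(x <- s) \sum_(y <- s) g x y * ((a == x) && (b == y))%:R.
Proof.
move=> us As Bs; rewrite (bigD1_seq a) //= [X in _ + X]big1 ?addr0; last first.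
  by move=> x xa; apply: big1 => y _; rewrite eq_sym (negPf xa) mulr0.
rewrite (bigD1_seq b) //= !eqxx mulr1 [X in _ + X]big1 ?addr0 // => y yb.
by rewrite eq_sym (negPf yb) mulr0.
Qed.

Section BoundedExpectation.
Context d (Omega : measurableType d) (R : realType) (P : probability Omega R).
Implicit Types f g : Omega -> R.

Definition bmeasurable f := measurable_fun setT f /\ exists k : R, forall w, `|f w| <= k.

(* [fine] sends infinite expectations to [0]; [Er] is only used on bounded
   measurable functions, where it loses nothing (lemma [expectE]). *)
Definition Er f : R := fine (expect P f).

Lemma bmeasurable_integrable f : bmeasurable f -> P.-integrable setT (EFin \o f).
Proof.
move=> [mf [k fk]]; apply: measurable_bounded_integrable => //.
  exact: le_lt_trans (probability_le1 P measurableT) (ltry _).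
by exists k; split; [exact: num_real|move=> r kr w _; exact: le_trans (fk w) (ltW kr)].
Qed.

Lemma expectE f : bmeasurable f -> expect P f = (Er f)%:E.
Proof.
by move=> bf; rewrite /Er fineK // (integrable_fin_num measurableT (bmeasurable_integrable bf)).
Qed.

Lemma bmeasurableD f g : bmeasurable f -> bmeasurable g -> bmeasurable (fun w => f w + g w).
Proof.
move=> [mf [k fk]] [mg [k' gk']]; split; first exact: measurable_funD.
by exists (k + k') => w; apply: le_trans (ler_normD _ _) _; exact: lerD.
Qed.

Lemma bmeasurableZ a f : bmeasurable f -> bmeasurable (fun w => a * f w).
Proof.
move=> [mf [k fk]]; split; first exact: measurable_funM.
by exists (`|a| * k) => w; rewrite normrM ler_wpM2l.
Qed.

Lemma bmeasurable_cst a : bmeasurable (fun _ => a).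
Proof. by split; [exact: measurable_cst|exists `|a|]. Qed.

Lemma bmeasurable_sum (I : Type) (s : seq I) (F : I -> Omega -> R) :
  (forall i, bmeasurable (F i)) -> bmeasurable (fun w => \sum_(i <- s) F i w).
Proof.
move=> bF; elim: s => [|i s IH].
  by under eq_fun do rewrite big_nil; exact: bmeasurable_cst.
by under eq_fun do rewrite big_cons; exact: bmeasurableD.
Qed.

Lemma bmeasurable_indic (E : set Omega) : measurable E -> bmeasurable (\1_E).
Proof.
move=> mE; split; first exact: measurable_indic.
by exists 1 => w; rewrite indicE; case: (w \in E); rewrite ?normr1 ?normr0.
Qed.

Lemma ErD f g : bmeasurable f -> bmeasurable g -> Er (fun w => f w + g w) = Er f + Er g.
Proof.
move=> bf bg; apply: EFin_inj; rewrite EFinD -!expectE //; last exact: bmeasurableD.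
rewrite /expect; under eq_integral do rewrite EFinD.
exact: (integralD measurableT (bmeasurable_integrable bf) (bmeasurable_integrable bg)).
Qed.

Lemma ErZ a f : bmeasurable f -> Er (fun w => a * f w) = a * Er f.
Proof.
move=> bf; apply: EFin_inj; rewrite EFinM -!expectE //; last exact: bmeasurableZ.
rewrite /expect; under eq_integral do rewrite EFinM.
exact: (integralZl measurableT (bmeasurable_integrable bf)).
Qed.

Lemma Er_cst a : Er (fun _ => a) = a.
Proof. by rewrite /Er /expect integral_cst //= probability_setT mule1. Qed.

Lemma Er_sum (I : Type) (s : seq I) (F : I -> Omega -> R) :
  (forall i, bmeasurable (F i)) -> Er (fun w => \sum_(i <- s) F i w) = \sum_(i <- s) Er (F i).
Proof.
move=> bF; elim: s => [|i s IH].
  by under eq_fun do rewrite big_nil; rewrite big_nil Er_cst.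
under eq_fun do rewrite big_cons.
by rewrite big_cons ErD ?IH //; exact: bmeasurable_sum.
Qed.

Lemma ler_Er f g : bmeasurable f -> bmeasurable g -> (forall w, f w <= g w) -> Er f <= Er g.
Proof.
move=> bf bg fg; rewrite -lee_fin -!expectE //.
apply: (le_integral measurableT (bmeasurable_integrable bf) (bmeasurable_integrable bg)).
by move=> w _; rewrite lee_fin.
Qed.

Lemma Er_indic (E : set Omega) : measurable E -> Er (\1_E) = fine (P E).
Proof. by move=> mE; rewrite /Er /expect integral_indic // setIT. Qed.

End BoundedExpectation.

Section DiscreteRandomVariables.
Context d (Omega : measurableType d) (R : realType) (P : probability Omega R).

Lemma rv_meas_comp (T1 T2 : Type) (X : Omega -> T1) (f : T1 -> T2) :
  rv_meas X -> rv_meas (fun w => f (X w)).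
Proof. by move=> mX B; exact: (mX (f @^-1` B)). Qed.

Lemma rv_meas_cst (T : Type) (x : T) : rv_meas (fun _ : Omega => x).
Proof.
move=> B; have [Bx|nBx] := pselect (B x).
  by rewrite (_ : _ @^-1` _ = setT) //; apply/seteqP; split.
by rewrite (_ : _ @^-1` _ = set0) //; apply/seteqP; split.
Qed.

Lemma rv_meas_countable (T : countType) (X : Omega -> T) :
  (forall x, measurable (X @^-1` [set x])) -> rv_meas X.
Proof.
move=> mX B.
pose F n := if @unpickle T n is Some x then
              if `[< B x >] then X @^-1` [set x] else set0
            else set0.
have -> : X @^-1` B = \bigcup_n F n.
  apply/seteqP; split => [w Bw|w [n _]].
    by exists (pickle (X w)) => //; rewrite /F pickleK; case: asboolP.
  by rewrite /F; case: (unpickle n) => [x|] //; case: asboolP => // Bx /= ->.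
apply: bigcupT_measurable => n; rewrite /F; case: (unpickle n) => [x|] //.
by case: asboolP.
Qed.

Lemma rv_meas_pair (T1 T2 : countType) (X : Omega -> T1) (Y : Omega -> T2) :
  rv_meas X -> rv_meas Y -> rv_meas (fun w => (X w, Y w)).
Proof.
move=> mX mY; apply: rv_meas_countable => -[x y].
rewrite (_ : _ @^-1` _ = X @^-1` [set x] `&` Y @^-1` [set y]); first exact: measurableI.
by apply/seteqP; split => w /=; case=> -> ->.
Qed.

Lemma rv_meas_ffun (I : finType) (T : countType) (X : I -> Omega -> T) :
  (forall i, rv_meas (X i)) -> rv_meas (fun w => [ffun i => X i w]).
Proof.
move=> mX; apply: rv_meas_countable => g.
rewrite (_ : _ @^-1` _ = \big[setI/setT]_(i <- enum I) (X i @^-1` [set g i])).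
  by apply: bigsetI_measurable => i _; exact: mX.
apply/seteqP; split => w /=; rewrite -bigcap_seq.
  by move=> <- i _ /=; rewrite ffunE.
by move=> Xg; apply/ffunP => i; rewrite ffunE; apply: Xg; rewrite /= mem_enum.
Qed.

Lemma rv_meas_measurable_fun (X : Omega -> R) : rv_meas X -> measurable_fun setT X.
Proof. by move=> mX _ B _; rewrite setTI; exact: mX. Qed.

Lemma bmeasurable_rv (T : Type) (X : Omega -> T) (g : T -> R) (k : R) :
  rv_meas X -> (forall w, `|g (X w)| <= k) -> bmeasurable (fun w => g (X w)).
Proof.
by move=> mX gk; split; [apply/rv_meas_measurable_fun/rv_meas_comp|exists k].
Qed.

Definition joint_pmf (T1 T2 : Type) (X : Omega -> T1) (Y : Omega -> T2) x y : R :=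
  fine (P [set w | X w = x /\ Y w = y]).

Section JointLaw.
Context (T : eqType) (s : seq T) (X Y : Omega -> T).
Hypotheses (s_uniq : uniq s) (mX : rv_meas X) (mY : rv_meas Y).
Hypotheses (Xs : forall w, X w \in s) (Ys : forall w, Y w \in s).

Lemma measurable_joint_event x y : measurable [set w | X w = x /\ Y w = y].
Proof.
rewrite (_ : [set w | _] = X @^-1` [set x] `&` Y @^-1` [set y]) //.
exact: measurableI.
Qed.

Lemma joint_pmf_ge0_le1 x y : 0 <= joint_pmf X Y x y <= 1.
Proof.
have mE := measurable_joint_event x y.
rewrite fine_ge0 ?measure_ge0 //= -lee_fin fineK ?probability_le1 //.
by rewrite ge0_fin_numE ?(le_lt_trans (probability_le1 P mE)) ?ltry.
Qed.

Lemma Er_joint (g : T -> T -> R) :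
  Er P (fun w => g (X w) (Y w)) = \sum_(x <- s) \sum_(y <- s) g x y * joint_pmf X Y x y.
Proof.
have -> : (fun w => g (X w) (Y w)) = (fun w => \sum_(x <- s) \sum_(y <- s)
              g x y * \1_[set w | X w = x /\ Y w = y] w).
  apply: funext => w; rewrite (sum_pair_indicator g s_uniq (Xs w) (Ys w)).
  apply: eq_bigr => x _; apply: eq_bigr => y _; rewrite indicE.
  congr (_ * (nat_of_bool _)%:R); apply/idP/idP => [/andP[/eqP<- /eqP<-]|/set_mem[-> ->]].
    exact: mem_set.
  by rewrite !eqxx.
rewrite Er_sum; last first.
  move=> x; apply: bmeasurable_sum => y.
  exact/bmeasurableZ/bmeasurable_indic/measurable_joint_event.
apply: eq_bigr => x _; rewrite Er_sum; last first.
  by move=> y; apply/bmeasurableZ/bmeasurable_indic/measurable_joint_event.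
apply: eq_bigr => y _; have mE := measurable_joint_event x y.
by rewrite ErZ ?Er_indic //; exact: bmeasurable_indic.
Qed.

End JointLaw.
End DiscreteRandomVariables.

Definition real_topology (R : realType) : topologicalType := HB.pack_for topologicalType R.
Local Notation ptwsR I R := {ptws I -> real_topology R}.

Lemma cube_cluster (I : eqType) (R : realType) (u : nat -> ptwsR I R) :
  (forall n i, 0 <= u n i <= 1) ->
  exists p : ptwsR I R, forall C, closed C -> (\forall n \near \oo, C (u n)) -> C p.
Proof.
move=> u01.
have cube_compact : compact [set f : ptwsR I R | forall i, `[0, 1]%classic (f i)].
  exact: (tychonoff (fun _ => @segment_compact R 0 1)).
have u_cube : (u @ \oo) [set f : ptwsR I R | forall i, `[0, 1]%classic (f i)].
  by exists 0%N => // n _ i; rewrite /= in_itv /= u01.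
have [p [_ clp]] := cube_compact _ _ u_cube.
exists p => C /closure_id closedC uC; rewrite closedC.
by move: clp; rewrite clusterE; apply.
Qed.

Section Continuity.
Context {T : topologicalType} {R : realType}.
Implicit Types F G : T -> R.

Lemma continuous_sum (J : Type) (s : seq J) (F : J -> T -> R) :
  (forall j, continuous (F j)) -> continuous (fun x => \sum_(j <- s) F j x).
Proof.
move=> Fc; elim: s => [|j s IH].
  by under eq_fun do rewrite big_nil; exact: cst_continuous.
by under eq_fun do rewrite big_cons; move=> x; apply: continuousD; [exact: Fc|exact: IH].
Qed.

Lemma continuous_mull a F : continuous F -> continuous (fun x => a * F x).
Proof. by move=> Fc x; apply: continuousM; [exact: cst_continuous|exact: Fc]. Qed.

Lemma continuous_mulr a F : continuous F -> continuous (fun x => F x * a).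
Proof. by move=> Fc x; apply: continuousM; [exact: Fc|exact: cst_continuous]. Qed.

Lemma continuous_add F G : continuous F -> continuous G -> continuous (fun x => F x + G x).
Proof. by move=> Fc Gc x; apply: continuousD; [exact: Fc|exact: Gc]. Qed.

Lemma continuous_sub F G : continuous F -> continuous G -> continuous (fun x => F x - G x).
Proof. by move=> Fc Gc x; apply: continuousB; [exact: Fc|exact: Gc]. Qed.

Lemma continuous_norm F : continuous F -> continuous (fun x => `|F x|).
Proof. by move=> Fc x; apply: continuous_comp; [exact: Fc|exact: norm_continuous]. Qed.

End Continuity.

Lemma continuous_coord (I : eqType) (R : realType) (i : I) :
  continuous (fun mu : ptwsR I R => (mu i : R)).
Proof. exact: proj_continuous. Qed.

Lemma le0_of_le_invS (R : realType) (x D : R) :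
  0 <= D -> (forall k, x <= D * k.+1%:R^-1) -> x <= 0.
Proof.
move=> D0 xD; rewrite leNgt; apply/negP => x_gt0.
have [k /[!add0r]] := ltr_add_invr (divr_gt0 x_gt0 (ltr_pwDr ltr01 D0 : 0 < D + 1)).
rewrite ltr_pdivlMr ?ltr_pwDr // => kx.
have := xD k; have : 0 <= k.+1%:R^-1 :> R by rewrite invr_ge0.
move: kx; move: (k.+1%:R^-1 : R) => e; nra.
Qed.

Section ApproximatelyStationary.
Variables (L M K S : nat) (Cap : 'I_L -> 'I_K -> nat) (Req : 'I_M -> 'I_K -> nat).
Variables (R : realType) (c0 : R) (c : 'I_M -> R) (U V : R) (lam : 'I_M * 'I_S -> R).
Hypotheses (c0_ge0 : 0 <= c0) (c_ge0 : forall m, 0 <= c m) (U_ge0 : 0 <= U) (V_ge0 : 0 <= V).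
Hypothesis lam_ge0 : forall i, 0 <= lam i.
Local Notation Ns l := (Nset S Cap Req l).
Local Notation cfg := (cfg M S).
Local Notation space := (ptwsR ('I_L * cfg * cfg) R).

Variables (u : nat -> space) (D r : R).
Hypotheses (D_ge0 : 0 <= D) (u_ge0_le1 : forall n i, 0 <= u n i <= 1).
Hypothesis u_sum1 : forall n l, \sum_(x <- Ns l) \sum_(y <- Ns l) u n (l, x, y) = 1.
Hypothesis u_stationary : forall n l x, x \in Ns l ->
  `|occ_fst Cap Req (u n) l x - occ_snd Cap Req (u n) l x| <= n.+1%:R^-1.
Hypothesis u_capacity : forall n m,
  load lam m <= occ_capacity Cap Req (u n) m + D * n.+1%:R^-1.
Hypothesis u_cost : forall n, occ_cost Cap Req c0 c U V (u n) <= r.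

Section ClusterPoint.
Variables (p : space)
  (p_cluster : forall C, closed C -> (\forall n \near \oo, C (u n)) -> C p).

Let le_at_p (f : space -> R) b :
  continuous f -> (\forall n \near \oo, f (u n) <= b) -> f p <= b.
Proof.
move=> fc f_le; have closedC : closed [set mu : space | f mu <= b].
  by apply: (@preimage_closed _ _ f [set y | y <= b] (fun x _ => fc x)); exact: closed_le.
exact (p_cluster closedC f_le).
Qed.

Let ge_at_p (f : space -> R) b :
  continuous f -> (\forall n \near \oo, b <= f (u n)) -> b <= f p.
Proof.
move=> fc f_ge; have closedC : closed [set mu : space | b <= f mu].
  by apply: (@preimage_closed _ _ f [set y | b <= y] (fun x _ => fc x)); exact: closed_ge.
exact (p_cluster closedC f_ge).
Qed.

Let inv_le k : \forall n \near \oo, n.+1%:R^-1 <= k.+1%:R^-1 :> R.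
Proof. by exists k => // n /= kn; rewrite lef_pV2 ?posrE ?ltr0n ?ler_nat. Qed.

Lemma cluster_ge0 i : 0 <= (p i : R).
Proof.
apply: (ge_at_p (f := fun mu : space => mu i : R) (b := 0)); first exact: continuous_coord.
by apply: nearW => n; case/andP: (u_ge0_le1 n i).
Qed.

Lemma cluster_sum1 l : \sum_(x <- Ns l) \sum_(y <- Ns l) p (l, x, y) = 1.
Proof.
have cont : continuous (fun mu : space => \sum_(x <- Ns l) \sum_(y <- Ns l) mu (l, x, y)).
  by do 2!apply: continuous_sum => ?; exact: continuous_coord.
apply/eqP; rewrite eq_le (le_at_p cont) ?(ge_at_p cont) //;
  by apply: nearW => n; rewrite u_sum1.
Qed.

Lemma cluster_stationary l x : x \in Ns l -> occ_fst Cap Req p l x = occ_snd Cap Req p l x.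
Proof.
move=> xs; have cont : continuous (fun mu : space =>
    `|occ_fst Cap Req mu l x - occ_snd Cap Req mu l x|).
  by apply/continuous_norm/continuous_sub; apply: continuous_sum => ?; exact: continuous_coord.
apply/eqP; rewrite -subr_eq0 -normr_le0; apply: (le0_of_le_invS ler01) => k.
rewrite mul1r (le_at_p cont) //.
by apply: filterS (inv_le k) => n; exact: le_trans (u_stationary n xs).
Qed.

Lemma cluster_capacity m : load lam m <= occ_capacity Cap Req p m.
Proof.
rewrite -subr_le0; apply: (le0_of_le_invS D_ge0) => k.
apply: (le_at_p (f := fun mu : space => load lam m - occ_capacity Cap Req mu m)).
  apply: continuous_sub; first exact: cst_continuous.
  by do 3!apply: continuous_sum => ?; apply/continuous_mulr/continuous_coord.
apply: filterS (inv_le k) => n nk /=; rewrite lerBlDl.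
by apply: le_trans (u_capacity n m) _; rewrite lerD2l ler_wpM2l.
Qed.

Lemma cluster_cost : occ_cost Cap Req c0 c U V p <= r.
Proof.
apply: (le_at_p (f := occ_cost Cap Req c0 c U V)); last exact: nearW u_cost.
apply: continuous_sum => l; apply: continuous_add; apply: continuous_mull;
  by do 2!apply: continuous_sum => ?; apply/continuous_mulr/continuous_coord.
Qed.

End ClusterPoint.

Lemma Copt_le_approx_stationary : Copt Cap Req c0 c U V lam <= r.
Proof.
have [p p_cluster] := @cube_cluster _ R u u_ge0_le1.
apply: le_trans (cluster_cost p_cluster).
exact: Copt_le_occ_cost lam_ge0 (cluster_ge0 p_cluster) (cluster_sum1 p_cluster)
  (cluster_stationary p_cluster) (cluster_capacity p_cluster) c0_ge0 c_ge0 U_ge0 V_ge0.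
Qed.

End ApproximatelyStationary.

Lemma limn_einf_lt_frequently (R : realType) (u : nat -> \bar R) (r : \bar R) :
  (limn_einf u < r)%E -> forall n, exists2 T, (n <= T)%N & (u T < r)%E.
Proof.
rewrite limn_einf_lim (cvg_lim _ (@cvg_einfs_sup R u)) // => lt_r n.
have /ereal_inf_lt [_ [T /= nT <-] uT] : (einfs u n < r)%E.
  by apply: le_lt_trans lt_r; apply: ereal_sup_ubound; exists n.
by exists T.
Qed.

Lemma exists_real_between (R : realType) (x : \bar R) (y : R) :
  (x < y%:E)%E -> exists2 r : R, (x < r%:E)%E & r < y.
Proof.
case: x => [x| |] //= xy; last by exists (y - 1); [exact: ltNyr|rewrite gtrBl].
by exists ((x + y) / 2); rewrite ?lte_fin in xy *; lra.
Qed.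

Section Policy.
Variables (L M K S : nat) (Cap : 'I_L -> 'I_K -> nat) (Req : 'I_M -> 'I_K -> nat)
  (R : realType) (c0 : R) (c : 'I_M -> R) (U V : R)
  (d : measure_display) (Omega : measurableType d) (P : probability Omega R)
  (Amax : nat) (lam : 'I_M * 'I_S -> R)
  (A : nat -> Omega -> cfg M S) (N : 'I_L -> nat -> Omega -> cfg M S).
Hypothesis Req_pos : forall m, exists k, (0 < Req m k)%N.
Hypotheses (A_meas : forall t, rv_meas (A t)) (A_le : forall t w i, (A t w i <= Amax)%N).
Hypothesis A_mean : forall t i, expect P (fun w => (A t w i)%:R) = (lam i)%:E.
Hypotheses (N_meas : forall l t, rv_meas (N l t))
  (N_feasible : forall l t w, feasibleN Cap Req l (N l t w)).

Local Notation Ns l := (Nset S Cap Req l).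
Local Notation cfg := (cfg M S).

Lemma feasibleN_le_Cmax l (x : cfg) i : feasibleN Cap Req l x -> (x i <= Cmax Cap)%N.
Proof.
case: i => m s /forallP feas; have [k Req_gt0] := Req_pos m.
have le_cap := feas k; rewrite (leq_trans _ (leq_trans le_cap _)) //.
  rewrite (bigD1 m) //= (leq_trans _ (leq_addr _ _)) // (leq_trans _ (leq_pmulr _ Req_gt0)) //.
  by rewrite (bigD1 s) //= leq_addr.
rewrite (leq_trans (@leq_bigmax _ (fun k => Cap l k) k)) //.
exact: (@leq_bigmax _ (fun l => \max_(k < K) Cap l k) l).
Qed.

Lemma N_in_Nset l t w : N l t w \in Ns l.
Proof.
rewrite mem_filter N_feasible /=; apply/mapP.
exists [ffun i => inord (N l t w i) : 'I_(Cmax Cap).+1]; first by rewrite mem_enum.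
by apply/ffunP => i; rewrite !ffunE inordK // ltnS; exact: feasibleN_le_Cmax.
Qed.

Lemma lam_ge0 i : 0 <= lam i.
Proof. by rewrite -lee_fin -(A_mean 0 i); apply: integral_ge0 => w _; rewrite lee_fin. Qed.

Definition trans_pmf l t x y : R := joint_pmf P (N l t.-1) (N l t) x y.

Definition occ T (i : 'I_L * cfg * cfg) : R :=
  T%:R^-1 * \sum_(1 <= t < T.+1) trans_pmf i.1.1 t i.1.2 i.2.

Lemma Er_transition l t (g : cfg -> cfg -> R) :
  Er P (fun w => g (N l t.-1 w) (N l t w)) =
  \sum_(x <- Ns l) \sum_(y <- Ns l) g x y * trans_pmf l t x y.
Proof.
exact: (Er_joint P (Nset_uniq _ _ _ _) (N_meas _ _) (N_meas _ _) (N_in_Nset _ _) (N_in_Nset _ _)).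
Qed.

Lemma bmeasurable_transition l t (g : cfg -> cfg -> R) :
  bmeasurable (fun w => g (N l t.-1 w) (N l t w)).
Proof.
apply: (bmeasurable_rv (X := fun w => (N l t.-1 w, N l t w)) (g := fun p => g p.1 p.2)
          (k := \sum_(x <- Ns l) \sum_(y <- Ns l) `|g x y|)); first exact: rv_meas_pair.
move=> w /=; have xs := N_in_Nset l t.-1 w; have ys := N_in_Nset l t w.
apply: le_trans (_ : _ <= \sum_(y <- Ns l) `|g (N l t.-1 w) y|) _.
  by apply: (ler_sum_seq_term (F := fun y => `|g _ y|)) => //; exact: Nset_uniq.
apply: (ler_sum_seq_term (F := fun x => \sum_(y <- Ns l) `|g x y|)) => //; first exact: Nset_uniq.
by move=> *; exact: sumr_ge0.
Qed.

Lemma trans_pmf_ge0_le1 l t x y : 0 <= trans_pmf l t x y <= 1.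
Proof. exact: joint_pmf_ge0_le1. Qed.

Lemma sum_trans_pmf l t : \sum_(x <- Ns l) \sum_(y <- Ns l) trans_pmf l t x y = 1.
Proof.
have := Er_transition l t (fun _ _ => 1); rewrite Er_cst => ->.
by apply: eq_bigr => x _; apply: eq_bigr => y _; rewrite mul1r.
Qed.

Definition avg_cost T : \bar R :=
  ((T%:R^-1)%:E *
   \sum_(1 <= t < T.+1) expect P (fun w => slot_cost c0 c U V (fun l u => N l u w) t))%E.

Lemma avg_costE T : avg_cost T = (occ_cost Cap Req c0 c U V (occ T))%:E.
Proof.
pose g (x y : cfg) := V * cost1 c0 c y + U * cost2 R x y.
have slotE t : expect P (fun w => slot_cost c0 c U V (fun l u => N l u w) t) =
    (\sum_(l < L) \sum_(x <- Ns l) \sum_(y <- Ns l) g x y * trans_pmf l t x y)%:E.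
  have bmeas l := bmeasurable_transition l t g.
  rewrite expectE; last exact: bmeasurable_sum.
  by rewrite /slot_cost Er_sum //; congr EFin; apply: eq_bigr => l _; exact: Er_transition.
rewrite /avg_cost; under eq_bigr do rewrite slotE.
rewrite sumEFin -EFinM; congr EFin.
have -> : occ_cost Cap Req c0 c U V (occ T) =
    \sum_(l < L) \sum_(x <- Ns l) \sum_(y <- Ns l) occ T (l, x, y) * g x y.
  apply: eq_bigr => l _; rewrite !mulr_sumr -big_split /=; apply: eq_bigr => x _.
  by rewrite !mulr_sumr -big_split /=; apply: eq_bigr => y _; rewrite /g; ring.
rewrite exchange_big mulr_sumr; apply: eq_bigr => l _.
rewrite exchange_big mulr_sumr; apply: eq_bigr => x _.
rewrite exchange_big mulr_sumr; apply: eq_bigr => y _.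
by rewrite /occ /= -mulrA mulr_suml; under eq_bigr do rewrite mulrC.
Qed.

Lemma occ_ge0_le1 T i : (0 < T)%N -> 0 <= occ T i <= 1.
Proof.
move=> T_gt0; have T_neq0 : T%:R != 0 :> R by rewrite pnatr_eq0 -lt0n.
have tp01 t := trans_pmf_ge0_le1 i.1.1 t i.1.2 i.2.
rewrite mulr_ge0 ?invr_ge0 ?sumr_ge0 //=; last by move=> t _; case/andP: (tp01 t).
rewrite -(mulVf T_neq0) ler_wpM2l ?invr_ge0 //.
rewrite -[X in _ <= X%:R](subn1 T.+1) -sumr_const_nat.
by apply: ler_sum => t _; case/andP: (tp01 t).
Qed.

Lemma occ_sum1 T l : (0 < T)%N -> \sum_(x <- Ns l) \sum_(y <- Ns l) occ T (l, x, y) = 1.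
Proof.
move=> T_gt0; rewrite /occ /=.
under eq_bigr do rewrite -mulr_sumr; rewrite -mulr_sumr.
under eq_bigr do rewrite exchange_big; rewrite exchange_big /=.
under eq_bigr do rewrite sum_trans_pmf.
by rewrite sumr_const_nat subn1 mulVf // pnatr_eq0 -lt0n.
Qed.

Definition marginal l t x : R := Er P (fun w => (N l t w == x)%:R).

Lemma marginal_ge0_le1 l t x : 0 <= marginal l t x <= 1.
Proof.
have bmeas : bmeasurable (fun w => (N l t w == x)%:R : R).
  apply: (bmeasurable_rv (g := fun y => (y == x)%:R) (k := 1)); first exact: N_meas.
  by move=> w; case: eqP; rewrite ?normr1 ?normr0.
rewrite -[0](Er_cst P) -[1](Er_cst P).
by apply/andP; split; apply: ler_Er => //; try exact: bmeasurable_cst; move=> w; case: eqP.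
Qed.

Lemma sum_trans_pmf_fst l t x : x \in Ns l ->
  \sum_(y <- Ns l) trans_pmf l t x y = marginal l t.-1 x.
Proof.
move=> xs; rewrite /marginal (Er_transition l t (fun a _ => (a == x)%:R)).
rewrite [RHS](bigD1_seq x) ?Nset_uniq //= eqxx [X in _ + X]big1 ?addr0; last first.
  by move=> a /negPf ax; apply: big1 => y _; rewrite ax mul0r.
by apply: eq_bigr => y _; rewrite mul1r.
Qed.

Lemma sum_trans_pmf_snd l t y : y \in Ns l ->
  \sum_(x <- Ns l) trans_pmf l t x y = marginal l t y.
Proof.
move=> ys; rewrite /marginal (Er_transition l t (fun _ b => (b == y)%:R)).
apply: eq_bigr => x _.
rewrite [RHS](bigD1_seq y) ?Nset_uniq //= eqxx mul1r [X in _ + X]big1 ?addr0 //.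
by move=> b /negPf ->; rewrite mul0r.
Qed.

Lemma occ_almost_stationary T l x : (0 < T)%N -> x \in Ns l ->
  `|occ_fst Cap Req (occ T) l x - occ_snd Cap Req (occ T) l x| <= T%:R^-1.
Proof.
move=> T_gt0 xs; rewrite /occ_fst /occ_snd /occ /= -!mulr_sumr -mulrBr.
rewrite exchange_big [X in _ - X]exchange_big /=.
under eq_bigr do rewrite sum_trans_pmf_fst //.
under [X in _ - X]eq_bigr do rewrite sum_trans_pmf_snd //.
rewrite -sumrB big_add1 /=; under eq_bigr do rewrite -opprB.
rewrite sumrN telescope_sumr // opprB normrM ger0_norm ?invr_ge0 // ler_piMr ?invr_ge0 //.
have := marginal_ge0_le1 l 0 x; have := marginal_ge0_le1 l T x.
by rewrite ler_norml => /andP[? ?] /andP[? ?]; apply/andP; split; lra.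
Qed.

Local Notation Q w := (queue (fun u => A u w) (fun l u => N l u w)).

Definition queue_size T w : R := (\sum_i Q w T i)%:R.

Lemma rv_meas_queue T : rv_meas (fun w => Q w T).
Proof.
elim: T => [|T IH]; first exact: rv_meas_cst.
pose F (p : cfg * cfg * {ffun 'I_L -> cfg}) := qstep p.1.1 (served p.1.1 (fun l => p.2 l)) p.1.2.
have -> : (fun w => Q w T.+1) = (fun w => F (Q w T, A T w, [ffun l => N l T w])).
  apply: funext => w; rewrite /F /=; congr (qstep _ (served _ _) _).
  by apply: funext => l; rewrite ffunE.
apply/rv_meas_comp/rv_meas_pair; first exact: rv_meas_pair.
by apply: rv_meas_ffun => l; exact: N_meas.
Qed.

Lemma measurable_queue_size T : measurable_fun setT (queue_size T).
Proof.
exact/rv_meas_measurable_fun/(rv_meas_comp (fun q : cfg => (\sum_i q i)%:R))/rv_meas_queue.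
Qed.

Definition capacity_used T m w : R := \sum_(t < T) \sum_(l < L) (nvms m (N l t w))%:R.

Lemma bmeasurable_capacity_used T m : bmeasurable (capacity_used T m).
Proof.
apply: bmeasurable_sum => t; apply: bmeasurable_sum => l.
exact: (bmeasurable_transition l t.+1 (fun x _ => (nvms m x)%:R)).
Qed.

Lemma arrived_work_le T m w :
  ((\sum_(t < T) work m (A t w))%:R : R) <= capacity_used T m w + S%:R * queue_size T w.
Proof.
have := work_arrivals_le (fun u => A u w) (fun l u => N l u w) m T.
have := work_le_total m (Q w T).
rewrite /capacity_used /queue_size => le_total le_work.
apply: le_trans
  (_ : _ <= ((\sum_(t < T) \sum_(l < L) nvms m (N l t w)) + S * \sum_i Q w T i)%N%:R) _.
  by rewrite ler_nat; lia.
by rewrite natrD natrM (natr_sum _ _ _ (fun t : 'I_T => _)); under eq_bigr do rewrite natr_sum.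
Qed.

Lemma arrived_workE T m :
  (fun w => ((\sum_(t < T) work m (A t w))%:R : R)) =
  (fun w => \sum_(t < T) \sum_(s < S) (s.+1)%:R * (A t w (m, s))%:R).
Proof.
apply: funext => w; rewrite natr_sum; apply: eq_bigr => t _.
by rewrite natr_sum; apply: eq_bigr => s _; rewrite natrM.
Qed.

Lemma bmeasurable_arrival t i : bmeasurable (fun w => (A t w i)%:R : R).
Proof.
apply: (bmeasurable_rv (g := fun a : cfg => (a i)%:R) (k := Amax%:R)); first exact: A_meas.
by move=> w; rewrite ger0_norm // ler_nat A_le.
Qed.

Lemma bmeasurable_arrived_work T m : bmeasurable (fun w => (\sum_(t < T) work m (A t w))%:R : R).
Proof.
rewrite arrived_workE; apply: bmeasurable_sum => t; apply: bmeasurable_sum => s.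
exact/bmeasurableZ/bmeasurable_arrival.
Qed.

Lemma Er_arrived_work T m :
  Er P (fun w => (\sum_(t < T) work m (A t w))%:R) = T%:R * load lam m.
Proof.
have Er_arrival t i : Er P (fun w => (A t w i)%:R) = lam i by rewrite /Er A_mean.
rewrite arrived_workE Er_sum; last first.
  by move=> t; apply: bmeasurable_sum => s; exact/bmeasurableZ/bmeasurable_arrival.
rewrite (eq_bigr (fun _ => load lam m)) ?sumr_const ?card_ord ?mulr_natl // => t _.
rewrite Er_sum; last by move=> s; exact/bmeasurableZ/bmeasurable_arrival.
by apply: eq_bigr => s _; rewrite ErZ ?Er_arrival //; exact: bmeasurable_arrival.
Qed.

Lemma occ_capacity_occ T m :
  occ_capacity Cap Req (occ T) m = T%:R^-1 * Er P (capacity_used T m).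
Proof.
pose g (x _ : cfg) : R := (nvms m x)%:R.
have bmeas t l := bmeasurable_transition l t.+1 g.
have Er_slot t : Er P (fun w => \sum_(l < L) g (N l t w) (N l t.+1 w)) =
    \sum_(l < L) \sum_(x <- Ns l) \sum_(y <- Ns l) g x y * trans_pmf l t.+1 x y.
  rewrite Er_sum; last by move=> l; exact: (bmeas t l).
  by apply: eq_bigr => l _; exact: (Er_transition l t.+1 g).
rewrite /capacity_used Er_sum; last by move=> t; apply: bmeasurable_sum => l; exact: (bmeas t l).
under eq_bigr => t _ do
  rewrite -[X in Er P X]/(fun w => \sum_(l < L) g (N l t w) (N l t.+1 w)) Er_slot.
rewrite [in RHS]exchange_big mulr_sumr; apply: eq_bigr => l _.
rewrite [in RHS]exchange_big mulr_sumr; apply: eq_bigr => x _.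
rewrite [in RHS]exchange_big mulr_sumr; apply: eq_bigr => y _.
by rewrite /occ /= big_add1 /= big_mkord -mulrA mulr_suml; under eq_bigr do rewrite mulrC.
Qed.

Lemma load_le_occ_capacity T m B : (0 < T)%N -> (expect P (queue_size T) <= B%:E)%E ->
  load lam m <= occ_capacity Cap Req (occ T) m + S%:R * B * T%:R^-1.
Proof.
move=> T_gt0 QB.
have mQ := measurable_queue_size T.
have [mcap _] := bmeasurable_capacity_used T m.
have cap_ge0 w : 0 <= capacity_used T m w by do 2!apply: sumr_ge0 => ? _.
have balance : T%:R * load lam m <= Er P (capacity_used T m) + S%:R * B.
  rewrite -Er_arrived_work -lee_fin -expectE; last exact: bmeasurable_arrived_work.
  apply: (le_trans (y := expect P (fun w => capacity_used T m w + S%:R * queue_size T w))).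
    apply: ge0_le_integral => //.
    - by apply/measurable_EFinP; case: (bmeasurable_arrived_work T m).
    - apply/measurable_EFinP/measurable_funD => //.
      by apply: measurable_funM => //; exact: measurable_cst.
    - by move=> w _; rewrite lee_fin arrived_work_le.
  rewrite /expect; under eq_integral do rewrite EFinD.
  rewrite ge0_integralD //; last first.
  - by apply/measurable_EFinP/measurable_funM => //; exact: measurable_cst.
  - by move=> w _; rewrite lee_fin mulr_ge0.
  - exact/measurable_EFinP.
  - by move=> w _; rewrite lee_fin.
  under [X in (_ + X <= _)%E]eq_integral do rewrite EFinM.
  rewrite ge0_integralZl //; last 2 first.
  - exact/measurable_EFinP.
  - by move=> w _; rewrite lee_fin.
  rewrite -/(expect P _) expectE ?EFinD ?EFinM; last exact: bmeasurable_capacity_used.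
  by rewrite leeD2l // lee_wpmul2l // lee_fin.
by rewrite occ_capacity_occ mulrC -mulrDl ler_pdivlMr ?ltr0n // mulrC.
Qed.

Lemma occ_capacity_bound :
  (exists q : R, (fun t => expect P (queue_size t)) @ \oo --> q%:E) ->
  exists2 D, 0 <= D & exists T0, forall T m, (T0 <= T)%N -> (0 < T)%N ->
    load lam m <= occ_capacity Cap Req (occ T) m + D * T%:R^-1.
Proof.
case=> q Qq; have q_lt : q < `|q| + 1 by rewrite (le_lt_trans (ler_norm q)) // ltrDl.
have [T0 _ QT] := Qq _ (open_ereal_lt' (q_lt : (q%:E < (`|q| + 1)%:E)%E)).
exists (S%:R * (`|q| + 1)); first by rewrite mulr_ge0 // addr_ge0.
by exists T0 => T m T0T T_gt0; apply: load_le_occ_capacity => //; exact/ltW/QT.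
Qed.

Hypotheses (c0_ge0 : 0 <= c0) (c_ge0 : forall m, 0 <= c m) (U_ge0 : 0 <= U) (V_ge0 : 0 <= V).

Lemma Copt_le_liminf_avg_cost :
  (exists q : R, (fun t => expect P (queue_size t)) @ \oo --> q%:E) ->
  ((Copt Cap Req c0 c U V lam)%:E <= limn_einf avg_cost)%E.
Proof.
move=> /occ_capacity_bound [D D_ge0 [T0 occ_capacityT]].
rewrite leNgt; apply/negP => /exists_real_between [r liminf_lt_r r_lt_Copt].
have /choice [Tn Tn_spec] : forall n, exists T, (maxn n.+1 T0 <= T)%N /\ (avg_cost T < r%:E)%E.
  by move=> n; have [T nT ?] := limn_einf_lt_frequently liminf_lt_r (maxn n.+1 T0); exists T.
have Tn_large n : (n.+1 <= Tn n)%N /\ (T0 <= Tn n)%N.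
  by case: (Tn_spec n); rewrite geq_max => /andP.
have Tn_gt0 n : (0 < Tn n)%N by case: (Tn_large n) => + _; exact: leq_trans.
have Tn_inv n : (Tn n)%:R^-1 <= n.+1%:R^-1 :> R.
  by rewrite lef_pV2 ?posrE ?ltr0n ?ler_nat //; case: (Tn_large n).
suff : Copt Cap Req c0 c U V lam <= r by rewrite leNgt r_lt_Copt.
apply: (Copt_le_approx_stationary c0_ge0 c_ge0 U_ge0 V_ge0 lam_ge0
  (u := fun n => occ (Tn n)) D_ge0).
- by move=> n i; exact: occ_ge0_le1.
- by move=> n l; exact: occ_sum1.
- by move=> n l x xs; exact: le_trans (occ_almost_stationary (Tn_gt0 n) xs) (Tn_inv n).
- move=> n m; rewrite (le_trans (occ_capacityT (Tn n) m _ (Tn_gt0 n))) ?lerD2l ?ler_wpM2l //.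
  by case: (Tn_large n).
- by move=> n; rewrite -lee_fin -avg_costE; case: (Tn_spec n) => _ /ltW.
Qed.

End Policy.

Theorem lemma1 (L M K S : nat) (Cap : 'I_L -> 'I_K -> nat) (Req : 'I_M -> 'I_K -> nat)
  (R : realType) (c0 : R) (c : 'I_M -> R) (U V : R)
  (d : measure_display) (Omega : measurableType d) (P : probability Omega R)
  (Amax : nat) (lam : 'I_M * 'I_S -> R)
  (A : nat -> Omega -> cfg M S)
  (N : 'I_L -> nat -> Omega -> cfg M S) :
  (forall m, exists k, (0 < Req m k)%N) ->
  0 <= c0 -> (forall m, 0 <= c m) -> 0 <= U -> 0 <= V ->
  in_capacity_region Cap Req lam ->
  (forall t, rv_meas (A t)) ->
  iid_seq P A ->
  (forall t w i, (A t w i <= Amax)%N) ->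
  (forall t i, expect P (fun w => (A t w i)%:R) = (lam i)%:E) ->
  (forall t i, (0 < P [set w | A t w i = 0%N])%E) ->
  (forall l t, rv_meas (N l t)) ->
  (forall l t w, feasibleN Cap Req l (N l t w)) ->
  (exists q : R,
     (fun t => expect P (fun w =>
        (\sum_(i : 'I_M * 'I_S) queue (fun u => A u w) (fun l u => N l u w) t i)%:R))
     @ \oo --> q%:E) ->
  ((Copt Cap Req c0 c U V lam)%:E
   <= limn_einf (fun T : nat =>
        ((T%:R)^-1)%:E *
        \sum_(1 <= t < T.+1) expect P (fun w => slot_cost c0 c U V (fun l u => N l u w) t)))%E.
Proof.
move=> Req_pos c0_ge0 c_ge0 U_ge0 V_ge0 _ A_meas _ A_le A_mean _ N_meas N_feasible stable.
exact: Copt_le_liminf_avg_cost.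
Qed.
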